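(* Let $\mu\in\mathbb{R}$, $\sigma^2>0$, and let $f(x)=\frac{1}{x\sqrt{2\pi\sigma^2}}\exp\left\{-\frac{(\log x-\mu)^2}{2\sigma^2}\right\}$ for $x\in(0,\infty)$ be the log-normal density. Then for every real $p\in(0,\infty)$, the number $\nu_p=\exp\left\{\mu+\frac{p-1}{2}\sigma^2\right\}$ satisfies $$\int_0^{\nu_p} y^{p-1} f(\nu_p-y)\,dy=\int_0^{\infty} y^{p-1} f(\nu_p+y)\,dy.$$ *)

From HB Require Import structures.
From mathcomp Require Import all_boot all_order all_algebra.
From mathcomp Require Import all_classical all_reals all_analysis.
Set Implicit Arguments. Unset Strict Implicit. Unset Printing Implicit Defensive.
Import Order.TTheory GRing.Theory Num.Theory.
Local Open Scope ring_scope.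

(* Log-normal density with parameters mu and s2 = sigma^2, defined on (0,oo);
   extended by 0 outside (0,oo) (only values on (0,oo) are used). *)
Definition lognormal_pdf (R : realType) (mu s2 : R) (x : R) : R :=
  if 0 < x then
    (x * Num.sqrt (2 * pi * s2))^-1 * expR (- ((ln x - mu) ^+ 2) / (2 * s2))
  else 0.

From HB Require Import structures.
From mathcomp Require Import all_boot all_order all_algebra.
From mathcomp Require Import all_classical all_reals all_analysis.
From mathcomp Require Import ring.
From mathcomp Require Import measurable_realfun.
Import Order.TTheory GRing.Theory Num.Theory.
Import numFieldNormedType.Exports.
Local Open Scope ring_scope.
Local Open Scope classical_set_scope.

(** The substitution x = nu y / (nu + y), the parallel sum of nu and y, maps
    ]0, +oo[ increasingly onto ]0, nu[, with nu - x = nu^2 / (nu + y) and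
    dx/dy = (nu / (nu + y))^2.  In logarithmic coordinates z |-> nu^2 / z is the
    reflection about ln nu, and for nu = exp(mu + (p - 1) sigma^2 / 2) the
    log-normal density satisfies f(z) = (nu / z)^(p + 1) f(nu^2 / z); these
    factors cancel exactly against x^(p-1) = y^(p-1) (nu / (nu + y))^(p-1) and
    the Jacobian, so the two integrands agree pointwise after substitution.
    As the integrands may be singular at the endpoints, the substitution is
    performed on the compact intervals [1/(n+1), n+1] and passed to the limit by
    monotone convergence. *)

Section exhaustion.
Context {R : realType}.

Lemma bigcup_itv_pos :
  \bigcup_n `[n.+1%:R^-1, n.+1%:R] = `]0, +oo[%classic :> set R.
Proof.
apply/seteqP; split => [y [n _]|y].
  rewrite /= !in_itv /= andbT => /andP[+ _]; apply: lt_le_trans.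
  by rewrite invr_gt0 ltr0n.
rewrite /= in_itv /= andbT => y0.
set n := Num.truncn (y + y^-1).
have y_lt : y + y^-1 < n.+1%:R := truncnS_gt _.
exists n => //=; rewrite in_itv /=; apply/andP; split.
  rewrite -[leRHS]invrK lef_pV2 ?posrE ?ltr0n ?invr_gt0 //.
  by rewrite (le_trans _ (ltW y_lt)) // lerDr ltW.
by rewrite (le_trans _ (ltW y_lt)) // lerDl ltW // invr_gt0.
Qed.

Lemma nondecreasing_itv_pos :
  nondecreasing_seq (fun n => `[n.+1%:R^-1, n.+1%:R]%classic : set R).
Proof.
move=> n m nm; rewrite subsetEset => y /=; rewrite !in_itv /= => /andP[ay yb].
rewrite (le_trans _ ay) ?(le_trans yb) ?ler_nat ?ltnS //.
by rewrite lef_pV2 ?posrE ?ltr0n // ler_nat ltnS.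
Qed.

Lemma eq_ge0_integral_bigcup d1 d2 (T1 : measurableType d1)
    (T2 : measurableType d2) (mu1 : measure T1 R) (mu2 : measure T2 R)
    (A : (set T1)^nat) (B : (set T2)^nat) (f : T1 -> \bar R) (g : T2 -> \bar R) :
  nondecreasing_seq A -> nondecreasing_seq B ->
  (forall n, measurable (A n)) -> (forall n, measurable (B n)) ->
  (forall n, measurable_fun (A n) f) -> (forall n, measurable_fun (B n) g) ->
  (forall n x, A n x -> 0 <= f x)%E -> (forall n y, B n y -> 0 <= g y)%E ->
  (forall n, \int[mu1]_(x in A n) f x = \int[mu2]_(y in B n) g y)%E ->
  (\int[mu1]_(x in \bigcup_n A n) f x = \int[mu2]_(y in \bigcup_n B n) g y)%E.
Proof.
move=> ndA ndB mA mB mf mg f0 g0 fg.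
have := ge0_nondecreasing_set_cvg_integral (mu := mu1) ndA mA mf f0.
rewrite (funext fg) => cvgA.
exact: cvg_unique cvgA (ge0_nondecreasing_set_cvg_integral (mu := mu2) ndB mB mg g0).
Qed.

End exhaustion.

Section increasing_substitution_itv0y.
Context {R : realType}.
Variables (F G : R -> R) (c d : R).
Hypothesis dF : {in `]0, +oo[%R, forall y, derivable F y 1}.
Hypothesis cF' : {in `]0, +oo[%R, continuous F^`()}.
Hypothesis F'_gt0 : {in `]0, +oo[%R, forall y, 0 < F^`() y}.
Hypothesis imF : F @` `]0, +oo[ = `]c, d[.
Hypothesis cG : {in `]c, d[%R, continuous G}.
Hypothesis G_ge0 : {in `]c, d[%R, forall x, 0 <= G x}.

Let pos_in {y : R} : 0 < y -> y \in `]0, +oo[%R.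
Proof. by rewrite in_itv /= andbT. Qed.

Let cF {y : R} : 0 < y -> {for y, continuous F}.
Proof.
by move=> y0; apply/differentiable_continuous/derivable1_diffP/dF/pos_in.
Qed.

Let F_in {y : R} : 0 < y -> F y \in `]c, d[%R.
Proof.
move=> y0; suff : `]c, d[%classic (F y) by [].
by rewrite -imF; exists y => //; exact: pos_in.
Qed.

Let F_lt {x y : R} : 0 < x -> x < y -> F x < F y.
Proof.
move=> x0 xy; have y0 := lt_trans x0 xy.
apply: (@gtr0_derive1_incr _ F x y) => //.
- by move=> z; rewrite in_itv /= => /andP[xz _]; apply/dF/pos_in/(lt_trans x0).
- by move=> z; rewrite in_itv /= => /andP[xz _]; apply/F'_gt0/pos_in/(lt_trans x0).
apply: continuous_in_subspaceT => z; rewrite inE /= in_itv /= => /andP[xz _].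
exact/cF/(lt_le_trans x0).
Qed.

Let F_le {x y : R} : 0 < x -> x <= y -> F x <= F y.
Proof. by move=> x0; rewrite le_eqVlt => /predU1P[->//|xy]; exact/ltW/F_lt. Qed.

Let itv_F_sub {a b : R} : 0 < a -> a <= b -> {subset `[F a, F b]%R <= `]c, d[%R}.
Proof.
move=> a0 ab x; rewrite !in_itv /= => /andP[Fax xFb].
move: (F_in a0) (F_in (lt_le_trans a0 ab)).
rewrite !in_itv /= => /andP[cFa _] /andP[_ Fbd].
by rewrite (lt_le_trans cFa Fax) (le_lt_trans xFb Fbd).
Qed.

Let integration_by_substitution_cc (a b : R) : 0 < a -> a <= b ->
  (\int[lebesgue_measure]_(x in `[F a, F b]) (G x)%:E =
   \int[lebesgue_measure]_(y in `[a, b]) (((G \o F) * F^`()%classic) y)%:E)%E.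
Proof.
move=> a0 ab; have b0 := lt_le_trans a0 ab.
apply: (@integration_by_substitution_increasing R F G a b ab).
- by move=> x y; rewrite !in_itv /= => /andP[ax _] _; apply/F_lt/(lt_le_trans a0).
- by move=> x; rewrite in_itv /= => /andP[ax _]; apply/cF'/pos_in/(lt_trans a0).
- by apply/cvg_ex; exists (F^`() a); apply/cvg_at_right_filter/cF'/pos_in.
- by apply/cvg_ex; exists (F^`() b); apply/cvg_at_left_filter/cF'/pos_in.
- split; [|exact/cvg_at_right_filter/cF|exact/cvg_at_left_filter/cF].
  by move=> x; rewrite in_itv /= => /andP[ax _]; apply/dF/pos_in/(lt_trans a0).
by apply: continuous_in_subspaceT => x /[!inE] /(itv_F_sub a0 ab) /cG.
Qed.

Lemma increasing_ge0_integration_by_substitution_itv0y :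
  (\int[lebesgue_measure]_(x in `]c, d[) (G x)%:E =
   \int[lebesgue_measure]_(y in `]0%R, +oo[) (((G \o F) * F^`()%classic) y)%:E)%E.
Proof.
pose a n : R := n.+1%:R^-1; pose b n : R := n.+1%:R.
have a0 n : 0 < a n by rewrite invr_gt0 ltr0n.
have ab n : a n <= b n.
  by rewrite (@le_trans _ _ 1) ?invf_le1 ?ler1n ?ltr0n.
pose A n := `[F (a n), F (b n)]%classic.
have UA : \bigcup_n A n = `]c, d[.
  apply/seteqP; split => [x [n _ /(itv_F_sub (a0 n) (ab n))] //|].
  rewrite -imF => _ [y + <-]; rewrite -bigcup_itv_pos => -[n _ /=].
  rewrite in_itv /= => /andP[ay yb].
  by exists n => //; rewrite /A /= in_itv /= !F_le ?(lt_le_trans (a0 n) ay).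
have ndA : nondecreasing_seq A.
  move=> n m nm; rewrite subsetEset => x; rewrite /A /= !in_itv /= => /andP[Fax xFb].
  have amn : a m <= a n by rewrite lef_pV2 ?posrE ?ltr0n // ler_nat ltnS.
  have bnm : b n <= b m by rewrite ler_nat ltnS.
  by rewrite (le_trans _ Fax) ?(le_trans xFb) ?F_le ?(lt_le_trans (a0 n) (ab n)).
have mG : measurable_fun `]c, d[ G.
  apply: open_continuous_measurable_fun; first exact: interval_open.
  by move=> x /[!inE]; exact: cG.
have mGF : measurable_fun (`]0, +oo[ : set R) ((G \o F) * F^`()%classic).
  apply: open_continuous_measurable_fun; first exact: interval_open.
  move=> y; rewrite inE /= in_itv /= andbT => y0.
  apply: continuousM; last exact/cF'/pos_in.
  by apply: continuous_comp; [exact: cF | exact/cG/F_in].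
have A_sub n : A n `<=` `]c, d[ by rewrite -UA; exact: bigcup_sup.
have B_sub n : `[n.+1%:R^-1, n.+1%:R] `<=` (`]0, +oo[ : set R).
  by rewrite -bigcup_itv_pos => y By; exists n.
rewrite -UA -bigcup_itv_pos.
apply: eq_ge0_integral_bigcup => //.
- exact: nondecreasing_itv_pos.
- by move=> n; exact: measurable_itv.
- by move=> n; apply/measurable_EFinP; exact: measurable_funS _ (A_sub n) mG.
- by move=> n; apply/measurable_EFinP; exact: measurable_funS _ (B_sub n) mGF.
- by move=> n x /A_sub cdx; rewrite lee_fin; apply: G_ge0.
- move=> n y /B_sub; rewrite /= in_itv /= andbT => y0.
  by rewrite lee_fin /= mulr_ge0 ?G_ge0 ?F_in // ltW // F'_gt0 ?pos_in.
- by move=> n; exact: integration_by_substitution_cc.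
Qed.

End increasing_substitution_itv0y.

Section parallel.
Context {R : realType}.

Definition parallel (nu y : R) := nu * y / (nu + y).

Lemma is_derive_parallel {nu y : R} : nu + y != 0 ->
  is_derive y 1 (parallel nu) (nu ^+ 2 / (nu + y) ^+ 2).
Proof.
move=> nuy0.
have dnum : is_derive y (1 : R) (fun z => nu * z) nu.
  by have := is_deriveZ nu (is_derive_id y (1 : R)); rewrite /GRing.scale /= mulr1.
have dden : is_derive y (1 : R) (fun z => nu + z) 1.
  by have := is_deriveD (is_derive_cst nu y (1 : R)) (is_derive_id y 1); rewrite add0r.
apply: is_derive_eq (is_deriveM dnum (is_deriveV nuy0 dden)) _.
by rewrite /GRing.scale /=; field.
Qed.

Lemma derive1_parallel {nu y : R} : nu + y != 0 ->
  (parallel nu)^`() y = nu ^+ 2 / (nu + y) ^+ 2.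
Proof. by move=> nuy0; rewrite derive1E; exact/derive_val/is_derive_parallel. Qed.

Lemma subr_parallel {nu y : R} : nu + y != 0 ->
  nu - parallel nu y = nu ^+ 2 / (nu + y).
Proof. by move=> nuy0; rewrite /parallel; field. Qed.

Variable nu : R.
Hypothesis nu_gt0 : 0 < nu.

Let pos_neq0 {y : R} : 0 < y -> nu + y != 0.
Proof. by move=> y0; rewrite gt_eqF // addr_gt0. Qed.

Lemma image_parallel : parallel nu @` `]0, +oo[ = `]0, nu[.
Proof.
apply/seteqP; split => [_ [y /= + <-]|x /=]; rewrite !in_itv /= ?andbT.
  move=> y0; rewrite divr_gt0 ?mulr_gt0 ?addr_gt0 //= -subr_gt0.
  by rewrite subr_parallel ?pos_neq0 // divr_gt0 ?exprn_gt0 ?addr_gt0.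
move=> /andP[x0 xnu]; have nux0 : nu - x != 0 by rewrite gt_eqF ?subr_gt0.
exists (nu * x / (nu - x)).
  by rewrite /= in_itv /= andbT divr_gt0 ?mulr_gt0 ?subr_gt0.
rewrite /parallel; have -> : nu + nu * x / (nu - x) = nu ^+ 2 / (nu - x) by field.
by field; rewrite nux0 gt_eqF.
Qed.

Lemma derive1_parallel_gt0 (y : R) : 0 < y -> 0 < (parallel nu)^`() y.
Proof.
by move=> y0; rewrite derive1_parallel ?pos_neq0 // divr_gt0 ?exprn_gt0 ?addr_gt0.
Qed.

Lemma derivable_parallel (y : R) : 0 < y -> derivable (parallel nu) y 1.
Proof. by move=> y0; have [] := is_derive_parallel (pos_neq0 y0). Qed.

Lemma continuous_derive1_parallel (y : R) : 0 < y ->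
  {for y, continuous (parallel nu)^`()}.
Proof.
move=> y0; have nuy0 := pos_neq0 y0.
have near_eq : \forall z \near y, nu ^+ 2 / (nu + z) ^+ 2 = (parallel nu)^`() z.
  near=> z; rewrite derive1_parallel ?pos_neq0 //; near: z; exact: lt_nbhsr.
apply: cvg_trans (near_eq_cvg near_eq) _.
rewrite derive1_parallel //; apply: cvgMr; apply: cvgV; first by rewrite expf_neq0.
rewrite expr2.
by apply: cvgM; (apply: cvgD; [exact: cvg_cst | exact: cvg_id]).
Unshelve. all: by end_near.
Qed.

End parallel.

Lemma continuous_powR {R : realType} (r x : R) : 0 < x ->
  {for x, continuous (fun y => y `^ r)}.
Proof.
move=> x0; have := @derivable_powR R 1 r x; rewrite in_itv /= x0 => /(_ isT).
by move/derivable1_diffP/differentiable_continuous.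
Qed.

Section lognormal.
Context {R : realType}.
Variables (mu s2 : R).

Lemma lognormal_pdf_ge0 (x : R) : 0 <= lognormal_pdf mu s2 x.
Proof.
rewrite /lognormal_pdf; case: ifP => // x0.
by rewrite mulr_ge0 ?expR_ge0 // invr_ge0 mulr_ge0 ?sqrtr_ge0 // ltW.
Qed.

Lemma continuous_lognormal_pdf (x : R) : 0 < s2 -> 0 < x ->
  {for x, continuous (lognormal_pdf mu s2)}.
Proof.
move=> s20 x0.
pose g y :=
  (y * Num.sqrt (2 * pi * s2))^-1 * expR (- ((ln y - mu) ^+ 2) / (2 * s2)).
have near_eq : \forall y \near x, g y = lognormal_pdf mu s2 y.
  near=> y; rewrite /lognormal_pdf ifT //; near: y; exact: lt_nbhsr.
apply: cvg_trans (near_eq_cvg near_eq) _.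
rewrite /lognormal_pdf ifT //; apply: cvgM.
  apply: cvgV; last by apply: cvgMl; exact: cvg_id.
  by rewrite mulf_neq0 ?gt_eqF // sqrtr_gt0 !mulr_gt0 // pi_gt0.
apply: continuous_comp; last exact: continuous_expR.
apply: cvgMl; apply: cvgN; rewrite expr2.
by apply: cvgM; (apply: cvgB; [exact: continuous_ln | exact: cvg_cst]).
Unshelve. all: by end_near.
Qed.

Lemma lognormal_pdf_reflect {p nu z : R} : s2 != 0 ->
  nu = expR (mu + (p - 1) / 2 * s2) -> 0 < z ->
  lognormal_pdf mu s2 z = (nu / z) `^ (p + 1) * lognormal_pdf mu s2 (nu ^+ 2 / z).
Proof.
move=> s20 -> z0; rewrite -(lnK z0); set L := mu + _; set t := ln z.
rewrite -expRM_natr -!expRB -expRM /lognormal_pdf !ifT ?expR_gt0 // !expRK.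
set c := Num.sqrt _; rewrite !invfM -!expRN.
rewrite [LHS]mulrAC -expRD !mulrA -expRD [RHS]mulrAC -expRD.
by congr (expR _ * _); rewrite /L; field.
Qed.

End lognormal.

Lemma lognormal_pdf_parallel {R : realType} (mu s2 p nu y : R) : s2 != 0 ->
  nu = expR (mu + (p - 1) / 2 * s2) -> 0 < y ->
  (parallel nu y) `^ (p - 1) * lognormal_pdf mu s2 (nu - parallel nu y)
    * (parallel nu)^`()%classic y
  = y `^ (p - 1) * lognormal_pdf mu s2 (nu + y).
Proof.
move=> s20 nuE y0; have nu0 : 0 < nu by rewrite nuE expR_gt0.
have z0 : 0 < nu + y by rewrite addr_gt0.
have t0 : 0 < nu / (nu + y) by rewrite divr_gt0.
rewrite derive1_parallel ?gt_eqF // subr_parallel ?gt_eqF //.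
rewrite (lognormal_pdf_reflect mu s2 s20 nuE z0).
have -> : parallel nu y = y * (nu / (nu + y)) by rewrite /parallel mulrCA mulrA.
set t := nu / (nu + y).
have -> : t `^ (p + 1) = t `^ (p - 1) * t ^+ 2.
  have -> : p + 1 = p - 1 + 2%:R by ring.
  by rewrite powRD ?powR_mulrn ?ltW // (gt_eqF t0) implybT.
by rewrite powRM ?ltW // expr_div_n -/t; ring.
Qed.

Theorem theorem2 (R : realType) (mu s2 p : R) (hs2 : 0 < s2) (hp : 0 < p) :
  let nu := expR (mu + (p - 1) / 2 * s2) in
  (\int[lebesgue_measure]_(y in `]0%R, nu[%classic)
      (y `^ (p - 1) * lognormal_pdf mu s2 (nu - y))%:E
   = \int[lebesgue_measure]_(y in `]0%R, +oo[%classic)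
      (y `^ (p - 1) * lognormal_pdf mu s2 (nu + y))%:E)%E.
Proof.
move=> nu; have nu_gt0 : 0 < nu := expR_gt0 _.
rewrite (@increasing_ge0_integration_by_substitution_itv0y _ (parallel nu)).
- apply: eq_integral => y; rewrite inE /= in_itv /= andbT => y0; congr EFin.
  exact: lognormal_pdf_parallel (lt0r_neq0 hs2) erefl y0.
- by move=> y; rewrite in_itv /= andbT; exact: derivable_parallel.
- by move=> y; rewrite in_itv /= andbT; exact: continuous_derive1_parallel.
- by move=> y; rewrite in_itv /= andbT; exact: derive1_parallel_gt0.
- exact: image_parallel.
- move=> x; rewrite in_itv /= => /andP[x0 xnu]; apply: cvgM.
    exact: continuous_powR.
  apply: (@continuous_comp _ _ _ (fun y => nu - y) (lognormal_pdf mu s2)).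
    by apply: cvgB; [exact: cvg_cst | exact: cvg_id].
  by apply: continuous_lognormal_pdf; rewrite ?subr_gt0.
- by move=> x _; rewrite mulr_ge0 ?powR_ge0 ?lognormal_pdf_ge0.
Qed.
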